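(* For all $\alpha,\beta\in\Lambda(V)$, $\bigl(Z(\alpha),Z(\beta)\bigr)=\langle\alpha,\beta\rangle$.
   Context: Let $\omega$ be a primitive cube root of unity, $\mathcal{E}=\mathbb{Z}[\omega]$, $\theta=\omega-\bar\omega$. For a cubic form $F(x_0,\dots,x_4)$ defining a smooth threefold, let $V\subset\mathbb{P}^5$ be the smooth fourfold $F+x_5^3=0$ with automorphism $\sigma(x_0,\dots,x_5)=(x_0,\dots,x_4,\omega x_5)$. $H^4_0(V;\mathbb{Z})$ is the orthogonal complement (for $\alpha\cdot\beta=\int_V\alpha\wedge\beta$) of the pullback of the class of a $3$-plane. $\Lambda(V)$ is the $\mathcal{E}$-module with underlying group $H^4_0(V;\mathbb{Z})$, $\omega$ acting by $\sigma^*$, and Hermitian form $\langle\alpha,\beta\rangle=\frac12[3\alpha\cdot\beta-\theta\,\alpha\cdot((\sigma^* )^{-1}\beta-\sigma^*\beta)]$. On $H^4(V;\mathbb{C})$ let $(a,b)=3\int_V a\wedge\bar b$. Let $H^4_\omega(V;\mathbb{C})$ be the $\omega$-eigenspace of $\sigma^*$, and $Z:\Lambda(V)\otimes_{\mathcal{E}}\mathbb{C}=H^4_0(V;\mathbb{R})\to H^4_\omega(V;\mathbb{C})$ the map given by inclusion $H^4_0(V;\mathbb{R})\subset H^4(V;\mathbb{C})$ followed by projection to the $\omega$-eigenspace. *)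

(* The middle cohomology lattice H^4(V;Z) of the cubic
   fourfold V is modelled as Z^n ('rV[int]_n), with the intersection form
   given by its Gram matrix G, the automorphism sigma^* by an integer matrix S
   acting on row vectors (x |-> x *m S), and the class of a 3-plane by h. *)
From HB Require Import structures.
From mathcomp Require Import all_boot all_order all_algebra all_field.
Set Implicit Arguments. Unset Strict Implicit. Unset Printing Implicit Defensive.
Import Order.TTheory GRing.Theory Num.Theory.
Local Open Scope ring_scope.

Definition cvec n (x : 'rV[int]_n) : 'rV[algC]_n := map_mx (fun k : int => k%:~R) x.
Definition cmx n (A : 'M[int]_n) : 'M[algC]_n := map_mx (fun k : int => k%:~R) A.

Definition idot n (G : 'M[int]_n) (x y : 'rV[int]_n) : int := (x *m G *m y^T) 0 0.

Definition cdot n (G : 'M[int]_n) (a b : 'rV[algC]_n) : algC :=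
  (a *m cmx G *m b^T) 0 0.

Definition herm3 n (G : 'M[int]_n) (a b : 'rV[algC]_n) : algC :=
  3 * cdot G a (map_mx (@Num.conj _) b).

Definition prim n (G : 'M[int]_n) (h : 'rV[int]_n) (x : 'rV[int]_n) : Prop :=
  idot G x h = 0.

(* the Hermitian form <alpha,beta> on Lambda(V), omega acting by sigma^*;
   theta = omega - conj omega *)
Definition lamform n (G S : 'M[int]_n) (w : algC) (x y : 'rV[int]_n) : algC :=
  let th := w - w^* in
  (3 * (idot G x y)%:~R
   - th * cdot G (cvec x) (cvec y *m invmx (cmx S) - cvec y *m cmx S)) / 2.

(* z is the projection of the complex class a to the w-eigenspace of
   sigma^*, with respect to the eigenspace decomposition of H^4(V;C)
   (eigenvalues 1, w, conj w since sigma^3 = 1) *)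
Definition projw n (S : 'M[int]_n) (w : algC) (a z : 'rV[algC]_n) : Prop :=
  z *m cmx S = w *: z /\
  exists u v : 'rV[algC]_n,
    u *m cmx S = u /\ v *m cmx S = w^* *: v /\ a = z + u + v.

From HB Require Import structures.
From mathcomp Require Import all_boot all_order all_algebra all_field.
From mathcomp Require Import ring.
Set Implicit Arguments. Unset Strict Implicit. Unset Printing Implicit Defensive.
Import Order.TTheory GRing.Theory Num.Theory.
Local Open Scope ring_scope.

(* Since sigma^* has order 3, every complex class splits into eigencomponents
   for 1, omega and conj omega, and the omega-component is
   P a = (a + conj omega sigma^* a + omega sigma^*^2 a) / 3.  As sigma^* is an
   isometry and integral classes are real, 3 int P alpha /\ conj (P beta)
   collapses to  alpha.beta + omega alpha.sigma^* beta
   + conj omega alpha.sigma^*^2 beta.  On primitive classes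
   1 + sigma^* + sigma^*^2 = 0 eliminates the last pairing, and writing
   omega = (theta - 1) / 2 gives <alpha, beta>. *)

Section PrimitiveCubeRoot.
Variable w : algC.
Hypothesis hw : 3.-primitive_root w.

Lemma prim_root3_expr : w ^+ 3 = 1.
Proof. exact: prim_expr_order. Qed.

Lemma prim_root3_sqr : w ^+ 2 = - w - 1.
Proof.
have w_neq1 : w != 1 by rewrite -[w]expr1 -(expr0 w) (eq_prim_root_expr hw).
have : (w - 1) * (w ^+ 2 + w + 1) == 0.
  by rewrite [_ * _](_ : _ = w ^+ 3 - 1); [rewrite prim_root3_expr subrr | ring].
rewrite mulf_eq0 subr_eq0 (negbTE w_neq1) => /eqP cyclo_w.
by rewrite -[LHS]subr0 -cyclo_w; ring.
Qed.

Lemma prim_root3_conj : w^* = w ^+ 2.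
Proof.
have norm_w : `|w| = 1.
  by apply/eqP; rewrite -(@pexpr_eq1 _ _ 3) // -normrX prim_root3_expr normr1.
have w_conjw : w * w^* = 1 by rewrite -normCK norm_w expr1n.
by rewrite -[LHS]mulr1 -prim_root3_expr; ring: w_conjw.
Qed.

End PrimitiveCubeRoot.

Section Pairing.
Variables (n : nat) (G : 'M[int]_n).

Lemma cdotDl x y z : cdot G (x + y) z = cdot G x z + cdot G y z.
Proof. by rewrite /cdot !mulmxDl mxE. Qed.

Lemma cdotDr x y z : cdot G z (x + y) = cdot G z x + cdot G z y.
Proof. by rewrite /cdot linearD /= mulmxDr mxE. Qed.

Lemma cdotZl k x z : cdot G (k *: x) z = k * cdot G x z.
Proof. by rewrite /cdot -!scalemxAl mxE. Qed.

Lemma cdotZr k x z : cdot G z (k *: x) = k * cdot G z x.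
Proof. by rewrite /cdot linearZ /= -scalemxAr mxE. Qed.

Lemma cdotBr x y z : cdot G z (x - y) = cdot G z x - cdot G z y.
Proof. by rewrite cdotDr -scaleN1r cdotZr mulN1r. Qed.

Lemma cdot_isometry (A : 'M[algC]_n) x y :
  A *m cmx G *m A^T = cmx G -> cdot G (x *m A) (y *m A) = cdot G x y.
Proof.
by move=> AGA; rewrite /cdot trmx_mul !mulmxA -(mulmxA x A) -(mulmxA x (A *m _)) AGA.
Qed.

Lemma idot_cdot x y : (idot G x y)%:~R = cdot G (cvec x) (cvec y).
Proof. by rewrite /cdot /cvec /cmx map_trmx -!map_mxM mxE. Qed.

End Pairing.

Lemma cvecM n (x : 'rV[int]_n) (A : 'M[int]_n) : cvec (x *m A) = cvec x *m cmx A.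
Proof. exact: map_mxM. Qed.

Lemma cmx_conj n (A : 'M[int]_n) : map_mx (@Num.conj _) (cmx A) = cmx A.
Proof. by apply/matrixP=> i j; rewrite !mxE rmorph_int. Qed.

Lemma cvec_conj n (x : 'rV[int]_n) : map_mx (@Num.conj _) (cvec x) = cvec x.
Proof. by apply/rowP=> i; rewrite !mxE rmorph_int. Qed.

(* For an eigenvalue lambda of sigma^*, the coefficient sum
   (1 + conj w lambda + w lambda^2) / 3 is 1 if lambda = w and 0 if lambda
   is 1 or conj w. *)
Definition eigenproj n (S : 'M[int]_n) (w : algC) (x : 'rV[algC]_n) :=
  3^-1 *: (x + w^* *: (x *m cmx S) + w *: (x *m cmx S *m cmx S)).

Section EigenProjection.
Variables (n : nat) (S : 'M[int]_n) (w : algC).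
Hypotheses (hw : 3.-primitive_root w) (hS3 : S ^+ 3 = 1).
Local Notation M := (cmx S).
Local Notation P := (eigenproj S w).

Lemma cmx_cube1 : M *m (M *m M) = 1%:M.
Proof. by rewrite /cmx -!map_mxM !mulmxE -expr2 -exprS hS3 map_mx1. Qed.

Lemma cmx_cube (x : 'rV[algC]_n) : x *m M *m M *m M = x.
Proof. by rewrite -!mulmxA cmx_cube1 mulmx1. Qed.

Lemma invmx_cmx : invmx M = M *m M.
Proof.
have [unitM _] := mulmx1_unit cmx_cube1.
by rewrite -[LHS]mulmx1 -cmx_cube1 !mulmxA mulVmx // mul1mx.
Qed.

Lemma projw_eigenproj x : projw S w x (P x).
Proof.
have wc := prim_root3_conj hw; have w2 := prim_root3_sqr hw.
rewrite /projw /eigenproj; split.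
  rewrite -scalemxAl !mulmxDl -!scalemxAl cmx_cube.
  move: (x *m M *m M) (x *m M) => q p; apply/rowP=> i; rewrite !mxE wc.
  ring: w2.
exists (3^-1 *: (x + x *m M + x *m M *m M)).
exists (3^-1 *: (x + w *: (x *m M) + w^* *: (x *m M *m M))).
rewrite -!scalemxAl !mulmxDl -!scalemxAl !cmx_cube.
move: (x *m M *m M) (x *m M) => q p.
split; last split; apply/rowP=> i; rewrite !mxE ?wc.
- ring.
- ring: w2.
- by field: w2.
Qed.

Lemma eigenproj_projw x z : projw S w x z -> z = P x.
Proof.
have wc := prim_root3_conj hw; have w2 := prim_root3_sqr hw.
move=> [zM [u [v [uM [vM ->]]]]].
rewrite /eigenproj !mulmxDl zM uM vM -!scalemxAl zM uM vM.
apply/rowP=> i; rewrite !mxE wc.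
by field: w2.
Qed.

Lemma eigenproj_conj b :
  map_mx (@Num.conj _) b = b -> map_mx (@Num.conj _) (P b) = eigenproj S w^* b.
Proof.
move=> b_real; rewrite /eigenproj !(map_mxZ, map_mxD, map_mxM) b_real cmx_conj.
by rewrite fmorphV rmorph_nat /= conjCK.
Qed.

Variable G : 'M[int]_n.
Hypothesis hSiso : S *m G *m S^T = G.

Lemma cdot_cmxl x y : cdot G (x *m M) y = cdot G x (y *m M *m M).
Proof.
by rewrite -[in LHS](cmx_cube y) cdot_isometry // /cmx map_trmx -!map_mxM hSiso.
Qed.

Lemma herm3_eigenproj a b : map_mx (@Num.conj _) b = b ->
  herm3 G (P a) (P b) =
  cdot G a b + w * cdot G a (b *m M) + w^* * cdot G a (b *m M *m M).
Proof.
have wc := prim_root3_conj hw; have w2 := prim_root3_sqr hw.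
move=> b_real; rewrite /herm3 eigenproj_conj // /eigenproj conjCK.
rewrite !(cdotDl, cdotDr, cdotZl, cdotZr) !cdot_cmxl !cmx_cube wc.
by field: w2.
Qed.

Lemma lamform_cdot alpha beta : beta *m S *m S + beta *m S + beta = 0 ->
  lamform G S w alpha beta =
  cdot G (cvec alpha) (cvec beta) + w * cdot G (cvec alpha) (cvec beta *m M)
  + w^* * cdot G (cvec alpha) (cvec beta *m M *m M).
Proof.
have wc := prim_root3_conj hw; have w2 := prim_root3_sqr hw.
move=> /(congr1 (@cvec n)); rewrite /cvec !map_mxD map_mx0 -!/(cvec _) !cvecM.
set a := cvec alpha; set b := cvec beta => beta_prim.
have : cdot G a (b *m M *m M + b *m M + b) = 0.
  by rewrite beta_prim /cdot trmx0 mulmx0 mxE.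
rewrite !cdotDr => sum_eq0.
have cdot_bMM : cdot G a (b *m M *m M) = - cdot G a b - cdot G a (b *m M).
  by rewrite -[LHS]subr0 -sum_eq0; ring.
rewrite /lamform invmx_cmx idot_cdot -/a -/b mulmxA cdotBr cdot_bMM wc.
by field: w2.
Qed.

End EigenProjection.

Theorem lemma2p2 (n : nat) (G S : 'M[int]_n) (h : 'rV[int]_n) (w : algC)
  (* omega is a primitive cube root of unity *)
  (hw : 3.-primitive_root w)
  (* the intersection form is symmetric and unimodular (Poincare duality) *)
  (hGsym : G^T = G) (hGuni : `|\det G| = 1)
  (* sigma^* is an automorphism of H^4(V;Z) of order dividing 3 preserving
     the intersection form *)
  (hS3 : S ^+ 3 = 1) (hSiso : S *m G *m S^T = G)
  (* sigma^* fixes the class h of a 3-plane, with h.h = 3 *)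
  (hSh : h *m S = h) (hh : idot G h h = 3)
  (* omega acts by sigma^* on Lambda(V) = H^4_0(V;Z): omega^2+omega+1 = 0 *)
  (hE : forall x, prim G h x -> x *m S *m S + x *m S + x = 0) :
  forall alpha beta : 'rV[int]_n, prim G h alpha -> prim G h beta ->
    (exists z, projw S w (cvec alpha) z) /\
    (forall za zb, projw S w (cvec alpha) za -> projw S w (cvec beta) zb ->
       herm3 G za zb = lamform G S w alpha beta).
Proof.
move=> alpha beta _ prim_beta; split.
  by exists (eigenproj S w (cvec alpha)); apply: projw_eigenproj.
move=> za zb /(eigenproj_projw hw) -> /(eigenproj_projw hw) ->.
rewrite herm3_eigenproj ?cvec_conj //.
by rewrite lamform_cdot // hE.
Qed.
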